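(* Let $K$ be an algebraically closed field of characteristic zero, $\deg_1$ the weighted degree on $K[x_1,\dots,x_n]$ assigning positive real weights $w_i$ to $x_i$, $\Phi=(f_1,\dots,f_n)$ a polynomial automorphism of $K^n$ with jacobian $\lambda$, $\Phi^{-1}=(g_1,\dots,g_n)$, $d_i=\deg_1(f_i)$, and $\deg_2$ the weighted degree assigning weight $d_i$ to $x_i$. Let $\delta_i(P)=\lambda^{-1}\frac{\partial P}{\partial x_i}$ and $\Delta_i(P)=\mathrm{j}(g_1,\dots,g_{i-1},P,g_{i+1},\dots,g_n)$. Then there exists an index $i$ such that $\deg_2(\Delta_i)\ge\deg_1(\delta_i)=-w_i$.
   Context: $\mathrm{j}$ denotes the jacobian determinant. For a p.w.h. degree $\deg$ and a $K$-derivation $\partial$ of $K[x_1,\dots,x_n]$, $\deg(\partial)=\sup\{\deg(\partial(P))-\deg(P) : P\ne 0\}$ (equal to $-\infty$ iff $\partial=0$). *)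

From HB Require Import structures.
From mathcomp Require Import all_boot all_order all_algebra.
From mathcomp Require Import mpoly.
From mathcomp Require Import boolp classical_sets reals constructive_ereal ereal.

Set Implicit Arguments.
Unset Strict Implicit.
Unset Printing Implicit Defensive.

Import Order.TTheory GRing.Theory Num.Theory.
Local Open Scope ring_scope.
Local Open Scope classical_set_scope.

Definition mweight (R : realType) (n : nat) (w : 'I_n -> R) (m : 'X_{1..n}) : R :=
  \sum_(i < n) w i * (m i)%:R.

Definition wdeg (R : realType) (K : fieldType) (n : nat) (w : 'I_n -> R)
    (p : {mpoly K[n]}) : \bar R :=
  \big[Order.max/-oo%E]_(m <- msupp p) (mweight w m)%:E.

Definition deriv_deg (R : realType) (K : fieldType) (n : nat) (w : 'I_n -> R)
    (D : {mpoly K[n]} -> {mpoly K[n]}) : \bar R :=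
  ereal_sup [set (wdeg w (D P) - wdeg w P)%E | P in [set P | P != 0]].

Definition jac (K : fieldType) (n : nat) (F : 'I_n -> {mpoly K[n]}) : {mpoly K[n]} :=
  \det (\matrix_(i < n, j < n) mderiv j (F i)).

Definition delta_op (K : fieldType) (n : nat) (lambda : K) (i : 'I_n)
    (P : {mpoly K[n]}) : {mpoly K[n]} :=
  lambda^-1 *: mderiv i P.

Definition Delta_op (K : fieldType) (n : nat) (g : 'I_n -> {mpoly K[n]}) (i : 'I_n)
    (P : {mpoly K[n]}) : {mpoly K[n]} :=
  jac (fun k => if k == i then P else g k).

From Pilot Require Import Defs.
From HB Require Import structures.
From mathcomp Require Import all_boot all_order all_algebra.
From mathcomp Require Import mpoly.
From mathcomp Require Import boolp classical_sets reals constructive_ereal ereal.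

(** Differentiation lowers the weighted degree by exactly [w i], which gives
  [deg_1 delta_i = -w_i].  For [Delta_i], test it on [P = x_k]: by the inverse
  function formula [Delta_i x_k = lambda^-1 (d f_k / d x_i) o Phi^-1], and since
  [deg_1 (h o Phi) <= deg_2 h], composing back with [Phi] gives
  [deg_2 (Delta_i x_k) >= deg_1 (d f_k / d x_i)].  Choosing [i] so that [x_i]
  divides a monomial of maximal weight [d_k] in [f_k] (possible because [f_k]
  is not constant), characteristic zero makes the latter degree [d_k - w_i],
  whence [deg_2 Delta_i >= deg_2 (Delta_i x_k) - deg_2 x_k >= -w_i]. *)

Set Implicit Arguments.
Unset Strict Implicit.
Unset Printing Implicit Defensive.

Import Order.TTheory GRing.Theory Num.Theory.
Local Open Scope ring_scope.

Lemma mpolyXU_neq0 (K : fieldType) (n : nat) (k : 'I_n) : ('X_k : {mpoly K[n]}) != 0.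
Proof. by rewrite -msupp_eq0 msuppX. Qed.

Lemma mnm_neq0P (n : nat) (m : 'X_{1..n}) : m != 0%MM -> exists i, (0 < m i)%N.
Proof.
move=> m0; have [i mi|m_eq0] := pickP (fun i => m i != 0%N).
  by exists i; rewrite lt0n.
by case/eqP: m0; apply/mnmP => i; rewrite mnm0E; apply/eqP/negbFE/m_eq0.
Qed.

Lemma comp_mpoly_eqXU_nonconst (K : fieldType) (n : nat) (p : {mpoly K[n]})
    (t : n.-tuple {mpoly K[n]}) (k : 'I_n) :
  p \mPo t = 'X_k -> exists2 m, m \in msupp p & m != 0%MM.
Proof.
move=> ptX; have [/hasP//|/hasPn p_const] := boolP (has (predC1 0%MM) (msupp p)).
have p_cst : p = (p@_0)%:MP.
  apply: msize1_polyC; rewrite msizeE; apply/bigmax_leqP_seq => m /p_const.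
  by rewrite negbK => /eqP -> _; rewrite mdeg0.
move: ptX; rewrite p_cst comp_mpolyC => /(congr1 (mcoeff U_(k))).
by rewrite mcoeffC mcoeffXU eqxx mnm1_eq0 mulr0 => /eqP; rewrite eq_sym oner_eq0.
Qed.

Section Derivations.
Variables (K : fieldType) (n : nat) (t : n.-tuple {mpoly K[n]}).
Implicit Types (p q : {mpoly K[n]}) (D : {mpoly K[n]} -> {mpoly K[n]}).

(* A derivation of [K[x]] into [K[x]] made a module through [p |-> p o t]. *)
Definition derivation_along D : Prop :=
  [/\ {morph D : p q / p + q},
      forall c p, D (c *: p) = c *: D p
    & forall p q, D (p * q) = D p * (q \mPo t) + (p \mPo t) * D q].

Lemma derivation_along1 D : derivation_along D -> D 1 = 0.
Proof.
case=> _ _ DM; have := DM 1 1; rewrite mulr1 comp_mpoly1 mulr1 mul1r.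
by move/esym/eqP; rewrite -subr_eq0 addrK => /eqP.
Qed.

Lemma derivation_along_eq D1 D2 :
  derivation_along D1 -> derivation_along D2 ->
  (forall i, D1 'X_i = D2 'X_i) -> D1 =1 D2.
Proof.
move=> D1d D2d DX p; have [D1D D1Z D1M] := D1d; have [D2D D2Z D2M] := D2d.
have D_1 : D1 1 = D2 1 by rewrite !derivation_along1.
have D_M a b : D1 a = D2 a -> D1 b = D2 b -> D1 (a * b) = D2 (a * b).
  by move=> Da Db; rewrite D1M D2M Da Db.
rewrite [p]mpolyE; apply: (big_ind (fun q => D1 q = D2 q)).
- by rewrite -(scale0r 1) D1Z D2Z !scale0r.
- by move=> a b Da Db; rewrite D1D D2D Da Db.
move=> m _; rewrite D1Z D2Z mpolyXE_id; congr (_ *: _).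
apply: (big_ind (fun q => D1 q = D2 q)) => // i _.
by elim: (m i) => [|k IHk]; rewrite ?expr0 // exprS D_M.
Qed.

Lemma mderivXU (i k : 'I_n) : mderiv k ('X_i : {mpoly K[n]}) = (i == k)%:R.
Proof.
rewrite mderivX mnm1E; case: eqP => [<-|_]; last by rewrite scale0r.
suff -> : (U_(i) - U_(i))%MM = 0%MM by rewrite mpolyX0 scale1r.
by apply/mnmP => l; rewrite mnmBE subnn mnm0E.
Qed.

Lemma mderiv_comp p (j : 'I_n) :
  mderiv j (p \mPo t) = \sum_(k < n) (mderiv k p \mPo t) * mderiv j (tnth t k).
Proof.
pose D q := \sum_(k < n) (mderiv k q \mPo t) * mderiv j (tnth t k).
have Dd : derivation_along D.
  split=> [q r|c q|q r]; rewrite /D.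
  - by rewrite -big_split; apply: eq_bigr => k _; rewrite mderivD raddfD mulrDl.
  - rewrite scaler_sumr; apply: eq_bigr => k _.
    by rewrite mderivZ comp_mpolyZ scalerAl.
  - rewrite mulr_suml mulr_sumr -big_split; apply: eq_bigr => k _.
    by rewrite mderivM rmorphD !rmorphM mulrDl mulrAC mulrA.
have Cd : derivation_along (fun q => mderiv j (q \mPo t)).
  split=> [q r|c q|q r]; first by rewrite raddfD mderivD.
    by rewrite comp_mpolyZ mderivZ.
  by rewrite rmorphM mderivM.
apply: (derivation_along_eq Cd Dd) => i; rewrite /D comp_mpolyXU -tnth_nth.
rewrite (bigD1 i) //= mderivXU eqxx rmorph1 mul1r big1 ?addr0 // => k ki.
by rewrite mderivXU eq_sym (negbTE ki) rmorph0 mul0r.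
Qed.

Lemma comp_mpolyA p (s : n.-tuple {mpoly K[n]}) :
  (p \mPo t) \mPo s = p \mPo [tuple tnth t i \mPo s | i < n].
Proof.
rewrite [p \mPo t]comp_mpolyE raddf_sum [RHS]comp_mpolyE; apply: eq_bigr => m _.
rewrite /= comp_mpolyZ rmorph_prod; congr (_ *: _); apply: eq_bigr => i _.
by rewrite rmorphXn tnth_mktuple.
Qed.

End Derivations.

Section Jacobian.
Variables (K : fieldType) (n : nat).
Implicit Types (F : 'I_n -> {mpoly K[n]}) (t : n.-tuple {mpoly K[n]}).

Definition jacobian_mx F : 'M[{mpoly K[n]}]_n := \matrix_(i, j) mderiv j (F i).

Lemma jacobian_mx_comp F t :
  jacobian_mx (fun k => F k \mPo t) =
  map_mx (comp_mpoly t) (jacobian_mx F) *m jacobian_mx (tnth t).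
Proof.
by apply/matrixP => i j; rewrite !mxE mderiv_comp; apply: eq_bigr => k _; rewrite !mxE.
Qed.

Lemma jacobian_mxX : jacobian_mx (fun k => 'X_k) = 1%:M.
Proof. by apply/matrixP => i j; rewrite !mxE mderivXU. Qed.

Lemma Delta_opXU g i k : Delta_op g i 'X_k = cofactor (jacobian_mx g) i k.
Proof.
rewrite /Delta_op /jac (expand_det_row _ i) (bigD1 k) //= big1 ?addr0; last first.
  by move=> j jk; rewrite !mxE eqxx mderivXU eq_sym (negbTE jk) mul0r.
rewrite !mxE eqxx mderivXU eqxx mul1r /cofactor; congr (_ * \det _).
by apply/matrixP => a b; rewrite !mxE eq_sym (negbTE (neq_lift _ _)).
Qed.

Variables (f g : 'I_n -> {mpoly K[n]}) (lambda : K).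
Hypotheses (fg : forall k, f k \mPo [tuple g j | j < n] = 'X_k)
  (jf : jac f = lambda%:MP).
Local Notation t := [tuple g j | j < n].

Lemma jacobian_mx_inverse :
  map_mx (comp_mpoly t) (jacobian_mx f) *m jacobian_mx g = 1%:M.
Proof.
have -> : jacobian_mx g = jacobian_mx (tnth t).
  by apply/matrixP => a b; rewrite !mxE tnth_mktuple.
by rewrite -jacobian_mxX -jacobian_mx_comp; apply/matrixP => a b; rewrite !mxE fg.
Qed.

Lemma jac_mulC_inverse : lambda%:MP * jac g = 1.
Proof.
have := congr1 determinant jacobian_mx_inverse.
rewrite det_mulmx det_map_mx det1 -[\det (jacobian_mx f)]/(jac f) jf /=.
by rewrite comp_mpolyC.
Qed.

Lemma jac_neq0 : lambda != 0.
Proof.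
apply: contra_eq_neq jac_mulC_inverse => ->.
by rewrite mpolyC0 mul0r eq_sym oner_neq0.
Qed.

Lemma jac_inverse : jac g = lambda^-1%:MP.
Proof.
rewrite -[jac g]mul1r -mpolyC1 -(mulVf jac_neq0) mpolyCM -mulrA.
by rewrite jac_mulC_inverse mulr1.
Qed.

(* Cramer's rule: the adjugate of [J g] is [jac g] times its inverse [(J f) o g]. *)
Lemma Delta_opXUE i k :
  Delta_op g i 'X_k = lambda^-1 *: (mderiv i (f k) \mPo t).
Proof.
set M := map_mx (comp_mpoly t) (jacobian_mx f).
have adjE : \adj (jacobian_mx g) = jac g *: M.
  rewrite -[\adj _]mulmx1 -(mulmx1C jacobian_mx_inverse) mulmxA mul_adj_mx.
  exact: mul_scalar_mx.
have := congr1 (fun A : 'M_n => A k i) adjE.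
by rewrite !mxE Delta_opXU => ->; rewrite jac_inverse mul_mpolyC.
Qed.

End Jacobian.

Section WeightedDegree.
Variables (R : realType) (K : fieldType) (n : nat) (w : 'I_n -> R).
Implicit Types (p q : {mpoly K[n]}) (m : 'X_{1..n}).

Lemma mweight0 : Defs.mweight w 0%MM = 0.
Proof. by rewrite /Defs.mweight big1 // => i _; rewrite mnm0E mulr0. Qed.

Lemma mweightD m1 m2 :
  Defs.mweight w (m1 + m2)%MM = Defs.mweight w m1 + Defs.mweight w m2.
Proof.
rewrite /Defs.mweight -big_split; apply: eq_bigr => i _.
by rewrite mnmDE natrD mulrDr.
Qed.

Lemma mweightU i : Defs.mweight w U_(i)%MM = w i.
Proof.
rewrite /Defs.mweight (bigD1 i) //= mnm1E eqxx mulr1 big1 ?addr0 // => j ji.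
by rewrite mnm1E eq_sym (negbTE ji) mulr0.
Qed.

Lemma mweight_gt0 m : (forall i, 0 < w i) -> m != 0%MM -> 0 < Defs.mweight w m.
Proof.
move=> w_gt0 /mnm_neq0P[j mj]; rewrite /Defs.mweight (bigD1 j) //=.
rewrite ltr_pwDl ?mulr_gt0 ?ltr0n // sumr_ge0 // => l _.
by rewrite mulr_ge0 ?ler0n ?ltW.
Qed.

Lemma wdeg_ub p m : m \in msupp p -> ((Defs.mweight w m)%:E <= wdeg w p)%E.
Proof. by move=> mp; apply: le_bigmax_seq. Qed.

Lemma wdeg_le p y :
  (forall m, m \in msupp p -> ((Defs.mweight w m)%:E <= y)%E) -> (wdeg w p <= y)%E.
Proof. by move=> H; rewrite /wdeg big_seq; apply: bigmax_le => //; apply: leNye. Qed.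

Lemma wdeg_att p :
  p != 0 -> exists2 m, m \in msupp p & wdeg w p = (Defs.mweight w m)%:E.
Proof.
rewrite -msupp_eq0 /wdeg; elim: (msupp p) => // m0 s IHs _; rewrite big_cons.
case: s IHs => [|m1 s] IHs.
  by exists m0; rewrite ?mem_head // big_nil; apply/max_idPl; rewrite leNye.
have [m ms ->] := IHs isT; rewrite /Order.max; case: ifP => _.
  by exists m; rewrite // in_cons ms orbT.
by exists m0; rewrite ?mem_head.
Qed.

Lemma wdeg0 : wdeg w (0 : {mpoly K[n]}) = -oo%E.
Proof. by rewrite /wdeg (eqP (_ : msupp 0 == [::])) ?msupp_eq0 // big_nil. Qed.

Lemma wdeg_le_fine p : (wdeg w p <= (fine (wdeg w p))%:E)%E.
Proof.
have [->|p0] := eqVneq p 0; first by rewrite wdeg0 leNye.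
by have [m _ ->] := wdeg_att p0.
Qed.

Lemma wdegZ_le c p : (wdeg w (c *: p) <= wdeg w p)%E.
Proof. by apply: wdeg_le => m /msuppZ_le; apply: wdeg_ub. Qed.

Lemma wdegZ c p : c != 0 -> wdeg w (c *: p) = wdeg w p.
Proof.
move=> c0; apply/le_anti; rewrite wdegZ_le /=.
by rewrite -{1}(scalerK c0 p) wdegZ_le.
Qed.

Lemma wdeg1 : wdeg w (1 : {mpoly K[n]}) = 0%:E.
Proof.
have s1 : msupp (1 : {mpoly K[n]}) = [:: 0%MM] by rewrite -mpolyC1 msupp1.
apply/le_anti/andP; split; last by rewrite -mweight0 wdeg_ub // s1 mem_head.
by apply: wdeg_le => m; rewrite s1 inE => /eqP ->; rewrite mweight0.
Qed.

Lemma wdegXU k : wdeg w ('X_k : {mpoly K[n]}) = (w k)%:E.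
Proof.
apply/le_anti/andP; split; last by rewrite -mweightU wdeg_ub // msuppX mem_head.
by apply: wdeg_le => m; rewrite msuppX inE => /eqP ->; rewrite mweightU.
Qed.

Lemma wdeg_sum (I : Type) (r : seq I) (P : pred I) (F : I -> {mpoly K[n]}) y :
  (forall i, P i -> (wdeg w (F i) <= y)%E) -> (wdeg w (\sum_(i <- r | P i) F i) <= y)%E.
Proof.
move=> FP; apply: (big_ind (fun q => (wdeg w q <= y)%E)) => //.
  by rewrite wdeg0 leNye.
move=> p q py qy; apply: wdeg_le => m /msuppD_le; rewrite mem_cat.
by case/orP => /wdeg_ub /le_trans; apply.
Qed.

Lemma wdegM p q a b : (wdeg w p <= a%:E)%E -> (wdeg w q <= b%:E)%E ->
  (wdeg w (p * q) <= (a + b)%:E)%E.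
Proof.
move=> pa qb; apply: wdeg_le => _ /msuppM_le /allpairsP[[m1 m2] /= [m1p m2q ->]].
rewrite mweightD lee_fin lerD // -lee_fin.
  exact: le_trans (wdeg_ub m1p) pa.
exact: le_trans (wdeg_ub m2q) qb.
Qed.

Lemma wdeg_prod (I : Type) (r : seq I) (P : pred I) (F : I -> {mpoly K[n]}) (a : I -> R) :
  (forall i, P i -> (wdeg w (F i) <= (a i)%:E)%E) ->
  (wdeg w (\prod_(i <- r | P i) F i) <= (\sum_(i <- r | P i) a i)%:E)%E.
Proof.
move=> FP; apply: (big_ind2 (fun q x => (wdeg w q <= x%:E)%E)) => //.
  by rewrite wdeg1.
by move=> *; apply: wdegM.
Qed.

Lemma wdegX p k a : (wdeg w p <= a%:E)%E -> (wdeg w (p ^+ k) <= (a *+ k)%:E)%E.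
Proof.
move=> pa; elim: k => [|k IHk]; first by rewrite expr0 wdeg1.
by rewrite exprS mulrS; apply: wdegM.
Qed.

Lemma wdeg_mderiv_le p i : (wdeg w (mderiv i p) <= wdeg w p - (w i)%:E)%E.
Proof.
apply: wdeg_le => m; rewrite mcoeff_msupp mcoeff_mderiv => pm.
have mUp : (m + U_(i))%MM \in msupp p.
  by rewrite mcoeff_msupp; apply: contra pm => /eqP ->; rewrite mul0rn.
have -> : Defs.mweight w m = Defs.mweight w (m + U_(i))%MM - w i.
  by rewrite mweightD mweightU addrK.
by rewrite EFinB leeB ?wdeg_ub.
Qed.

Lemma wdeg_mderiv_ge p i m : [pchar K] =i pred0 ->
  m \in msupp p -> (0 < m i)%N ->
  ((Defs.mweight w m - w i)%:E <= wdeg w (mderiv i p))%E.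
Proof.
move=> K0 mp mi; set m' := (m - U_(i))%MM.
have m'U : (m' + U_(i))%MM = m.
  apply/mnmP => l; rewrite mnmDE mnmBE mnm1E.
  by case: eqP => [<-|_]; rewrite ?subnK ?subn0 ?addn0.
have m'_supp : m' \in msupp (mderiv i p).
  rewrite mcoeff_msupp mcoeff_mderiv m'U -mulr_natr mulf_neq0 -?mcoeff_msupp //.
  by rewrite ((pcharf0P K).1 K0).
by rewrite -m'U mweightD mweightU addrK wdeg_ub.
Qed.

Lemma wdeg_att_neq0 p : (forall i, 0 < w i) ->
    (exists2 m, m \in msupp p & m != 0%MM) ->
  exists m, [/\ m \in msupp p, wdeg w p = (Defs.mweight w m)%:E & m != 0%MM].
Proof.
move=> w_gt0 [m0 m0p m0_neq0].
have [|m mp pm] := @wdeg_att p; first by apply: contraTneq m0p => ->; rewrite msupp0.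
exists m; split=> //; apply: contraTneq (wdeg_ub m0p) => m_eq0.
by rewrite pm m_eq0 mweight0 lee_fin -ltNge mweight_gt0.
Qed.

End WeightedDegree.

Lemma wdeg_comp (R : realType) (K : fieldType) (n : nat) (w d : 'I_n -> R)
    (t : n.-tuple {mpoly K[n]}) (p : {mpoly K[n]}) :
  (forall j, (wdeg w (tnth t j) <= (d j)%:E)%E) -> (wdeg w (p \mPo t) <= wdeg d p)%E.
Proof.
move=> td; rewrite comp_mpolyE big_seq; apply: wdeg_sum => m mp.
apply: le_trans (wdegZ_le _ _ _) (le_trans _ (wdeg_ub d mp)).
rewrite /Defs.mweight (eq_bigr (fun i => d i *+ m i)) => [|i _]; last first.
  by rewrite mulr_natr.
by apply: wdeg_prod => i _; apply: wdegX.
Qed.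

Lemma deriv_deg_ge (R : realType) (K : fieldType) (n : nat) (w : 'I_n -> R)
    (D : {mpoly K[n]} -> {mpoly K[n]}) (P : {mpoly K[n]}) :
  P != 0 -> (wdeg w (D P) - wdeg w P <= deriv_deg w D)%E.
Proof. by move=> P0; apply: ereal_sup_ubound; exists P. Qed.

Lemma deriv_deg_delta_op (R : realType) (K : fieldType) (n : nat) (w : 'I_n -> R)
    (lambda : K) (i : 'I_n) :
  lambda != 0 -> deriv_deg w (delta_op lambda i) = (- w i)%:E.
Proof.
move=> l0; have li : lambda^-1 != 0 by rewrite invr_eq0.
apply/le_anti/andP; split; last first.
  apply: le_trans _ (deriv_deg_ge _ _ (mpolyXU_neq0 _ i)).
  by rewrite /delta_op mderivXU eqxx wdegZ // wdeg1 wdegXU sub0e.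
apply: ge_ereal_sup => _ [P /= P0 <-]; rewrite /delta_op wdegZ //.
have [m _ Pm] := wdeg_att w P0.
apply: le_trans (leeB (wdeg_mderiv_le w P i) (lexx _)) _.
by rewrite Pm -!EFinB lee_fin addrAC subrr add0r.
Qed.

Lemma wdeg_mderiv_le_Delta_opXU (R : realType) (K : fieldType) (n : nat)
    (w : 'I_n -> R) (f g : 'I_n -> {mpoly K[n]}) (lambda : K) (i k : 'I_n) :
  (forall k, f k \mPo [tuple g j | j < n] = 'X_k) ->
  (forall k, g k \mPo [tuple f j | j < n] = 'X_k) ->
  jac f = lambda%:MP ->
  (wdeg w (mderiv i (f k)) <=
   wdeg (fun j => fine (wdeg w (f j))) (Delta_op g i 'X_k))%E.
Proof.
move=> fg gf jf; rewrite (Delta_opXUE fg jf) wdegZ ?invr_eq0 ?(jac_neq0 fg jf) //.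
set h := mderiv i (f k) \mPo _.
have -> : mderiv i (f k) = h \mPo [tuple f j | j < n].
  rewrite comp_mpolyA -[LHS]comp_mpoly_id; congr (_ \mPo _).
  by apply: eq_from_tnth => j; rewrite !tnth_mktuple gf.
by apply: wdeg_comp => j; rewrite tnth_mktuple wdeg_le_fine.
Qed.

Theorem lemma5 (K : closedFieldType) (R : realType) (n : nat)
  (w : 'I_n -> R) (f g : 'I_n -> {mpoly K[n]}) (lambda : K) :
  [pchar K] =i pred0 ->
  (0 < n)%N ->
  (forall i, 0 < w i) ->
  (* Phi = (f_1,...,f_n) is a polynomial automorphism with inverse (g_1,...,g_n) *)
  (forall k, f k \mPo [tuple g j | j < n] = 'X_k) ->
  (forall k, g k \mPo [tuple f j | j < n] = 'X_k) ->
  (* the jacobian of Phi is lambda *)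
  jac f = lambda%:MP ->
  let d := fun i => fine (wdeg w (f i)) in
  exists i : 'I_n,
    (deriv_deg w (delta_op lambda i) <= deriv_deg d (Delta_op g i))%E /\
    deriv_deg w (delta_op lambda i) = (- w i)%:E.
Proof.
move=> K0 n0 w_gt0 fg gf jf d; pose k := Ordinal n0.
have [m [fk_m fk_deg m_neq0]] :=
  wdeg_att_neq0 w_gt0 (comp_mpoly_eqXU_nonconst (fg k)).
have [i m_i] := mnm_neq0P m_neq0.
exists i; rewrite deriv_deg_delta_op ?(jac_neq0 fg jf) //; split=> //.
apply: le_trans _ (deriv_deg_ge _ _ (mpolyXU_neq0 _ k)).
rewrite wdegXU /d fk_deg /=.
have -> : (- w i)%:E = ((Defs.mweight w m - w i)%:E - (Defs.mweight w m)%:E)%E.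
  by rewrite -EFinB addrAC subrr add0r.
apply: leeB (lexx _); apply: le_trans (wdeg_mderiv_ge w K0 fk_m m_i) _.
exact: wdeg_mderiv_le_Delta_opXU fg gf jf.
Qed.
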